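(* Every vulnerable directed $st$-graph is edge-weak.
   Context: A directed $st$-graph $G=(V,E,s,t)$ is a finite directed graph with no self-loops and no parallel edges, with distinct source $s$ (no incoming edges) and sink $t$ (no outgoing edges), such that every vertex lies on some directed walk from $s$ to $t$. Vulnerability: $P(G)$ is the set of directed $s$–$t$ walks; a flow is a finitely supported $\varphi:P(G)\to\mathbb{R}_{\ge0}$ inducing $\varphi(e)=\sum_p(\text{occurrences of }e\text{ in }p)\varphi(p)$; a latency function assigns each edge a continuous non-decreasing $l_e:\mathbb{R}_{\ge0}\to\mathbb{R}_{\ge0}$ with $l_p(\varphi)=\sum_{e\in p}l_e(\varphi(e))$; $\varphi$ of total value $r$ is a Wardrop flow for $(G,r,l)$ if $l_p(\varphi)\le l_q(\varphi)$ whenever $\varphi(p)>0$; $L(G,r,l)$ is the common latency of used paths ($0$ if $r=0$); $G$ is vulnerable if $L(G,r,l)>L(H,r,l|_H)$ for some $r$, $l$ and subgraph $H$ with the same source and sink. Edge-weakness: given capacities $c:E\to\mathbb{R}_{\ge0}$, a flow is $f:E\to\mathbb{R}_{\ge0}$ with $f(e)\le c_e$ and conservation at vertices other than $s,t$, of value $\sum_{e\in out(s)}f(e)$; $f$ is saturating if every $s$–$t$ walk contains an edge with $f(e)=c_e$; $G$ is edge-weak if for some capacities there is a saturating flow of value strictly less than the maximum flow value. *)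

From Stdlib Require Import Reals List Arith.
Import ListNotations.
Open Scope R_scope.

(* A directed edge is an ordered pair of vertices (vertices are nats).
   Representing edges as pairs + NoDup on the edge list = no parallel edges. *)
Definition edge := (nat * nat)%type.

Definition edge_eq_dec : forall x y : edge, {x = y} + {x <> y}.
Proof. decide equality; apply Nat.eq_dec. Defined.

Fixpoint walk (E : list edge) (u : nat) (p : list edge) (v : nat) : Prop :=
  match p with
  | [] => u = v
  | e :: p' => In e E /\ fst e = u /\ walk E (snd e) p' v
  end.

Definition is_st_graph (V : list nat) (E : list edge) (s t : nat) : Prop :=
  NoDup V /\ NoDup E /\
  (forall e, In e E -> In (fst e) V /\ In (snd e) V /\ fst e <> snd e) /\
  In s V /\ In t V /\ s <> t /\
  (forall e, In e E -> snd e <> s) /\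
  (forall e, In e E -> fst e <> t) /\
  (forall v, In v V -> exists p1 p2, walk E s p1 v /\ walk E v p2 t).

Definition sumR (l : list R) : R := fold_right Rplus 0 l.

(* A finitely supported path flow: a finite list of (walk, amount) pairs;
   the flow on a walk p is the sum of the amounts attached to p. *)
Definition pflow := list (list edge * R).

Definition path_value (phi : pflow) (p : list edge) : R :=
  sumR (map (fun pv => if list_eq_dec edge_eq_dec (fst pv) p then snd pv else 0) phi).

Definition edge_load (phi : pflow) (e : edge) : R :=
  sumR (map (fun pv => INR (count_occ edge_eq_dec (fst pv) e) * snd pv) phi).

Definition flow_value (phi : pflow) : R := sumR (map snd phi).

Definition path_lat (l : edge -> R -> R) (phi : pflow) (p : list edge) : R :=
  sumR (map (fun e => l e (edge_load phi e)) p).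

Definition is_path_flow (E : list edge) (s t : nat) (phi : pflow) : Prop :=
  forall pv, In pv phi -> walk E s (fst pv) t /\ 0 <= snd pv.

Definition is_wardrop (E : list edge) (s t : nat) (r : R) (l : edge -> R -> R)
    (phi : pflow) : Prop :=
  is_path_flow E s t phi /\ flow_value phi = r /\
  (forall p q, 0 < path_value phi p -> walk E s q t ->
     path_lat l phi p <= path_lat l phi q).

(* [wardrop_latency E s t r l c]: c is L(G,r,l), i.e. there is a Wardrop flow
   and c is the common latency of its used paths (0 if r = 0). *)
Definition wardrop_latency (E : list edge) (s t : nat) (r : R)
    (l : edge -> R -> R) (c : R) : Prop :=
  exists phi, is_wardrop E s t r l phi /\
    ((r = 0 /\ c = 0) \/
     (0 < r /\ exists p, 0 < path_value phi p /\ c = path_lat l phi p)).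

Definition cont_nonneg (f : R -> R) : Prop :=
  forall x, 0 <= x -> forall eps, 0 < eps -> exists delta, 0 < delta /\
    forall y, 0 <= y -> Rabs (y - x) < delta -> Rabs (f y - f x) < eps.

Definition latency_fn (E : list edge) (l : edge -> R -> R) : Prop :=
  forall e, In e E ->
    (forall x, 0 <= x -> 0 <= l e x) /\
    (forall x y, 0 <= x -> x <= y -> l e x <= l e y) /\
    cont_nonneg (l e).

(* Subgraph H with the same source and sink is given by its edge set EH ⊆ E. *)
Definition vulnerable (V : list nat) (E : list edge) (s t : nat) : Prop :=
  exists (r : R) (l : edge -> R -> R) (EH : list edge) (cG cH : R),
    0 <= r /\ latency_fn E l /\ incl EH E /\
    wardrop_latency E s t r l cG /\ wardrop_latency EH s t r l cH /\ cH < cG.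

Definition in_sum (E : list edge) (f : edge -> R) (v : nat) : R :=
  sumR (map f (filter (fun e => Nat.eqb (snd e) v) E)).
Definition out_sum (E : list edge) (f : edge -> R) (v : nat) : R :=
  sumR (map f (filter (fun e => Nat.eqb (fst e) v) E)).

Definition is_edge_flow (V : list nat) (E : list edge) (s t : nat)
    (c f : edge -> R) : Prop :=
  (forall e, In e E -> 0 <= f e /\ f e <= c e) /\
  (forall v, In v V -> v <> s -> v <> t -> in_sum E f v = out_sum E f v).

Definition edge_flow_value (E : list edge) (s : nat) (f : edge -> R) : R :=
  out_sum E f s.

Definition saturating (E : list edge) (s t : nat) (c f : edge -> R) : Prop :=
  forall p, walk E s p t -> exists e, In e p /\ f e = c e.

(* value of f strictly less than the max-flow value  <=>  some feasible flow
   has strictly larger value *)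
Definition edge_weak (V : list nat) (E : list edge) (s t : nat) : Prop :=
  exists c : edge -> R, (forall e, In e E -> 0 <= c e) /\
    exists f, is_edge_flow V E s t c f /\ saturating E s t c f /\
      exists g, is_edge_flow V E s t c g /\
        edge_flow_value E s f < edge_flow_value E s g.

(* Let phi and psi be Wardrop flows of value r > 0 in G and in the subgraph H, with
   L(H) < L(G). Call a vertex strictly ahead if some walk of H reaches it with a
   psi-latency beating, by a uniform margin, the phi-latency of every walk of G to it:
   the sink is strictly ahead, the source is not. On an edge leaving the vertices that
   are not ahead, Wardrop optimality of psi and monotonicity of the latency force the
   psi-load, if positive, to be strictly below the phi-load. With the phi-loads as
   capacities on these cut edges and ample capacities elsewhere, the phi-load is a
   saturating flow of value r, while (1 + eps) times the psi-load is a feasible flow of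
   value (1 + eps) r. *)

From Stdlib Require Import Reals List.
From Stdlib Require Import Lra Lia Classical ClassicalEpsilon.
Import ListNotations.
Open Scope R_scope.

Lemma sumR_app l1 l2 : sumR (l1 ++ l2) = sumR l1 + sumR l2.
Proof. induction l1 as [|a l1 IH]; simpl; [lra | rewrite IH; lra]. Qed.

Lemma sumR_map_ext {A} (f g : A -> R) l :
  (forall a, In a l -> f a = g a) -> sumR (map f l) = sumR (map g l).
Proof. intros H; f_equal; apply map_ext_in, H. Qed.

Lemma sumR_map_add {A} (f g : A -> R) l :
  sumR (map (fun a => f a + g a) l) = sumR (map f l) + sumR (map g l).
Proof. induction l as [|a l IH]; simpl; [lra | rewrite IH; lra]. Qed.

Lemma sumR_map_scal {A} k (f : A -> R) l :
  sumR (map (fun a => k * f a) l) = k * sumR (map f l).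
Proof. induction l as [|a l IH]; simpl; [lra | rewrite IH; lra]. Qed.

Lemma sumR_map_zero {A} (l : list A) : sumR (map (fun _ => 0) l) = 0.
Proof. induction l as [|a l IH]; simpl; [lra | rewrite IH; lra]. Qed.

Lemma sumR_map_nonneg {A} (f : A -> R) l :
  (forall a, In a l -> 0 <= f a) -> 0 <= sumR (map f l).
Proof.
  induction l as [|a l IH]; simpl; intros H; [lra|].
  assert (0 <= f a) by auto. assert (0 <= sumR (map f l)) by auto. lra.
Qed.

Lemma sumR_map_ge_elem {A} (f : A -> R) l a :
  (forall b, In b l -> 0 <= f b) -> In a l -> f a <= sumR (map f l).
Proof.
  induction l as [|b l IH]; simpl; intros H Ha; [contradiction|].
  destruct Ha as [<- | Ha].
  - assert (0 <= sumR (map f l)) by (apply sumR_map_nonneg; auto). lra.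
  - assert (0 <= f b) by auto. assert (f a <= sumR (map f l)) by auto. lra.
Qed.

Lemma sumR_map_pos_elem {A} (f : A -> R) l :
  0 < sumR (map f l) -> exists a, In a l /\ 0 < f a.
Proof.
  induction l as [|b l IH]; simpl; intros H; [lra|].
  destruct (Rlt_dec 0 (f b)) as [Hb | Hb]; [now exists b; auto|].
  destruct IH as [a [Ha Hfa]]; [lra | now exists a; auto].
Qed.

Lemma sumR_indicator_notin (a : edge) l : ~ In a l ->
  sumR (map (fun e => if edge_eq_dec a e then 1 else 0) l) = 0.
Proof.
  intros Ha. rewrite (sumR_map_ext _ (fun _ => 0)); [apply sumR_map_zero|].
  intros e He. destruct (edge_eq_dec a e); [subst; contradiction | reflexivity].
Qed.

Lemma sumR_indicator_in (a : edge) l : NoDup l -> In a l ->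
  sumR (map (fun e => if edge_eq_dec a e then 1 else 0) l) = 1.
Proof.
  induction l as [|b l IH]; simpl; intros Hnd Ha; [contradiction|].
  inversion Hnd as [|? ? Hb Hl]; subst. destruct (edge_eq_dec a b) as [<- | Hab].
  - rewrite sumR_indicator_notin; auto; lra.
  - destruct Ha as [-> | Ha]; [congruence|]. rewrite IH; auto; lra.
Qed.

Lemma sumR_count_occ_filter (P : edge -> bool) E p : NoDup E -> incl p E ->
  sumR (map (fun e => INR (count_occ edge_eq_dec p e)) (filter P E))
  = INR (length (filter P p)).
Proof.
  intros HE. induction p as [|a p IH]; intros Hp; [apply sumR_map_zero|].
  rewrite (sumR_map_ext _ (fun e => INR (count_occ edge_eq_dec p e) +
                                   (if edge_eq_dec a e then 1 else 0))).
  2:{ intros e _. simpl. destruct (edge_eq_dec a e); [rewrite S_INR|]; lra. }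
  rewrite sumR_map_add, IH by (intros e He; apply Hp; now right).
  assert (HaE : In a E) by (apply Hp; now left).
  cbn [filter]. destruct (P a) eqn:HPa; cbn [length].
  - rewrite sumR_indicator_in, S_INR; [lra | now apply NoDup_filter |].
    now apply filter_In.
  - rewrite sumR_indicator_notin; [lra|]. rewrite filter_In. intros [_ H]; congruence.
Qed.

Lemma sumR_edge_load_filter (P : edge -> bool) E phi : NoDup E ->
  (forall pv, In pv phi -> incl (fst pv) E) ->
  sumR (map (edge_load phi) (filter P E))
  = sumR (map (fun pv => snd pv * INR (length (filter P (fst pv)))) phi).
Proof.
  intros HE. induction phi as [|pv phi IH]; intros Hphi.
  - apply sumR_map_zero.
  - rewrite (sumR_map_ext _ (fun e => snd pv * INR (count_occ edge_eq_dec (fst pv) e)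
                                    + edge_load phi e)).
    2:{ intros e _. unfold edge_load. simpl. lra. }
    rewrite sumR_map_add, sumR_map_scal, sumR_count_occ_filter, IH; auto.
    + intros pv' Hpv'. apply Hphi. now right.
    + apply Hphi. now left.
Qed.

Lemma walk_app E u p1 w p2 v :
  walk E u p1 w -> walk E w p2 v -> walk E u (p1 ++ p2) v.
Proof.
  revert u; induction p1; simpl; intros u H1 H2; [now subst|].
  destruct H1 as [? [? ?]]. eauto.
Qed.

Lemma walk_app_inv E u p1 p2 v :
  walk E u (p1 ++ p2) v -> exists w, walk E u p1 w /\ walk E w p2 v.
Proof.
  revert u; induction p1; simpl; intros u H; [now exists u|].
  destruct H as [? [? H]]. destruct (IHp1 _ H) as [w [? ?]]. now exists w.
Qed.

Lemma walk_incl E E' u p v : incl E E' -> walk E u p v -> walk E' u p v.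
Proof.
  revert u; induction p; simpl; intros u Hi H; auto.
  destruct H as [? [? ?]]. auto.
Qed.

Lemma walk_incl_edges E u p v : walk E u p v -> incl p E.
Proof.
  revert u; induction p; simpl; intros u H e He; [contradiction|].
  destruct H as [? [? Hw]]. destruct He as [<- | He]; [assumption | exact (IHp _ Hw e He)].
Qed.

Lemma walk_cross (W : nat -> Prop) E u p v :
  walk E u p v -> ~ W u -> W v -> exists e, In e p /\ ~ W (fst e) /\ W (snd e).
Proof.
  revert u; induction p as [|a p IH]; simpl; intros u H Wu Wv; [now subst|].
  destruct H as [_ [<- Hw]]. destruct (classic (W (snd a))) as [Wa | Wa].
  - now exists a; auto.
  - destruct (IH _ Hw Wa Wv) as [e [? ?]]. now exists e; auto.
Qed.

(* Every visit of [v] by a walk is entered and left once, except at its endpoints. *)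
Lemma walk_balance E u p w v : walk E u p w ->
  (length (filter (fun e => Nat.eqb (snd e) v) p) + (if Nat.eqb u v then 1 else 0)
   = length (filter (fun e => Nat.eqb (fst e) v) p) + (if Nat.eqb w v then 1 else 0))%nat.
Proof.
  revert u; induction p as [|a p IH]; simpl; intros u H; [subst; lia|].
  destruct H as [_ [<- Hw]]. specialize (IH _ Hw).
  destruct (Nat.eqb (snd a) v), (Nat.eqb (fst a) v); simpl; lia.
Qed.

Definition conserves (V : list nat) (E : list edge) (s t : nat) (f : edge -> R) : Prop :=
  forall v, In v V -> v <> s -> v <> t -> in_sum E f v = out_sum E f v.

Lemma conserves_scal V E s t k f :
  conserves V E s t f -> conserves V E s t (fun e => k * f e).
Proof.
  intros Hf v Hv Hs Ht. unfold in_sum, out_sum. rewrite !sumR_map_scal.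
  f_equal. now apply Hf.
Qed.

Lemma edge_load_nonneg phi e :
  (forall pv, In pv phi -> 0 <= snd pv) -> 0 <= edge_load phi e.
Proof.
  intros H. apply sumR_map_nonneg. intros pv Hpv.
  apply Rmult_le_pos; [apply pos_INR | auto].
Qed.

Lemma edge_load_conserves V E s t phi :
  NoDup E -> is_path_flow E s t phi -> conserves V E s t (edge_load phi).
Proof.
  intros HE Hphi v _ Hs Ht.
  assert (Hincl : forall pv, In pv phi -> incl (fst pv) E)
    by (intros pv Hpv; eapply walk_incl_edges, Hphi, Hpv).
  unfold in_sum, out_sum. rewrite !sumR_edge_load_filter by assumption.
  apply sumR_map_ext. intros pv Hpv.
  pose proof (walk_balance _ _ _ _ v (proj1 (Hphi pv Hpv))) as B.
  rewrite (proj2 (Nat.eqb_neq s v)), (proj2 (Nat.eqb_neq t v)), !Nat.add_0_r in B by auto.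
  do 2 f_equal. exact B.
Qed.

Lemma edge_load_value E s t phi : NoDup E -> s <> t ->
  (forall e, In e E -> snd e <> s) -> is_path_flow E s t phi ->
  edge_flow_value E s (edge_load phi) = flow_value phi.
Proof.
  intros HE Hst Hs Hphi.
  assert (Hincl : forall pv, In pv phi -> incl (fst pv) E)
    by (intros pv Hpv; eapply walk_incl_edges, Hphi, Hpv).
  unfold edge_flow_value, out_sum. rewrite sumR_edge_load_filter by assumption.
  apply sumR_map_ext. intros pv Hpv.
  pose proof (walk_balance _ _ _ _ s (proj1 (Hphi pv Hpv))) as B.
  rewrite Nat.eqb_refl, (proj2 (Nat.eqb_neq t s)) in B by auto.
  assert (Hin : filter (fun e => Nat.eqb (snd e) s) (fst pv) = []).
  { transitivity (filter (fun _ : edge => false) (fst pv)); [|apply filter_false].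
    apply filter_ext_in.
    intros e He. apply Nat.eqb_neq, Hs.
    eapply walk_incl_edges; [apply Hphi, Hpv | exact He]. }
  rewrite Hin, Nat.add_0_r in B. simpl in B.
  replace (INR _) with (INR 1) by (f_equal; exact B). simpl. lra.
Qed.

Lemma path_lat_app l phi p1 p2 :
  path_lat l phi (p1 ++ p2) = path_lat l phi p1 + path_lat l phi p2.
Proof. unfold path_lat. now rewrite map_app, sumR_app. Qed.

Lemma path_lat_nonneg E l phi u p v : latency_fn E l ->
  (forall pv, In pv phi -> 0 <= snd pv) -> walk E u p v -> 0 <= path_lat l phi p.
Proof.
  intros Hl Hphi Hw. apply sumR_map_nonneg. intros e He.
  apply (Hl e (walk_incl_edges _ _ _ _ Hw e He)). now apply edge_load_nonneg.
Qed.

Lemma path_value_pos_inv (phi : pflow) p : 0 < path_value phi p ->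
  exists pv, In pv phi /\ fst pv = p /\ 0 < snd pv.
Proof.
  intros H. destruct (sumR_map_pos_elem _ _ H) as [pv [Hin Hp]].
  destruct (list_eq_dec edge_eq_dec (fst pv) p); [now exists pv | lra].
Qed.

Lemma path_value_ge_amount (phi : pflow) pv :
  (forall pv, In pv phi -> 0 <= snd pv) -> In pv phi -> snd pv <= path_value phi (fst pv).
Proof.
  intros H Hin. unfold path_value.
  set (g := fun pv' : list edge * R =>
              if list_eq_dec edge_eq_dec (fst pv') (fst pv) then snd pv' else 0).
  replace (snd pv) with (g pv)
    by (unfold g; now destruct (list_eq_dec edge_eq_dec (fst pv) (fst pv))).
  apply sumR_map_ge_elem; [|exact Hin].
  intros b Hb. unfold g. destruct (list_eq_dec _ _ _); [now apply H | lra].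
Qed.

Lemma edge_load_pos_inv (phi : pflow) e :
  (forall pv, In pv phi -> 0 <= snd pv) -> 0 < edge_load phi e ->
  exists pv, In pv phi /\ In e (fst pv) /\ 0 < path_value phi (fst pv).
Proof.
  intros Hphi He. destruct (sumR_map_pos_elem _ _ He) as [pv [Hpv Hpos]].
  exists pv. split; [exact Hpv|]. split.
  - apply (count_occ_In edge_eq_dec). destruct (count_occ _ _ _); [simpl in Hpos; lra | lia].
  - pose proof (path_value_ge_amount _ _ Hphi Hpv).
    pose proof (pos_INR (count_occ edge_eq_dec (fst pv) e)). nra.
Qed.

Section StrictlyAhead.

Variables (E EH : list edge) (s t : nat) (l : edge -> R -> R) (phi psi : pflow).

Definition strictly_ahead (v : nat) : Prop :=
  exists qH, walk EH s qH v /\ exists d, 0 < d /\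
    forall q, walk E s q v -> path_lat l psi qH + d <= path_lat l phi q.

Lemma source_not_strictly_ahead : incl EH E -> latency_fn E l ->
  (forall pv, In pv psi -> 0 <= snd pv) -> ~ strictly_ahead s.
Proof.
  intros HEH Hl Hpsi [qH [HqH [d [Hd Hq]]]].
  specialize (Hq [] eq_refl). unfold path_lat at 2 in Hq. simpl in Hq.
  pose proof (path_lat_nonneg E l psi s qH s Hl Hpsi (walk_incl _ _ _ _ _ HEH HqH)). lra.
Qed.

Lemma sink_strictly_ahead qH c : walk EH s qH t -> path_lat l psi qH < c ->
  (forall q, walk E s q t -> c <= path_lat l phi q) -> strictly_ahead t.
Proof.
  intros HqH Hlt Hq. exists qH. split; [exact HqH|].
  exists (c - path_lat l psi qH). split; [lra|]. intros q Hw. specialize (Hq q Hw). lra.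
Qed.

Hypothesis psi_flow : is_path_flow EH s t psi.
Hypothesis psi_wardrop : forall p q, 0 < path_value psi p -> walk EH s q t ->
  path_lat l psi p <= path_lat l psi q.

(* Reroute a used walk of [psi] through [e] along the walk witnessing that [snd e] is
   ahead, and compare with a [phi]-fast walk to [fst e] extended by [e]. *)
Lemma crossing_edge_load_lt e : In e E -> latency_fn E l ->
  ~ strictly_ahead (fst e) -> strictly_ahead (snd e) ->
  0 <= edge_load phi e -> 0 < edge_load psi e -> edge_load psi e < edge_load phi e.
Proof.
  intros He Hl Hfst [qH [HqH [d [Hd Hsnd]]]] Hx Hpos.
  destruct (edge_load_pos_inv psi e (fun pv H => proj2 (psi_flow pv H)) Hpos)
    as [[p ?] [Hpa [Hep Hused]]]; simpl in Hep, Hused.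
  pose proof (proj1 (psi_flow _ Hpa)) as Hp; simpl in Hp.
  destruct (in_split _ _ Hep) as [p1 [p2 ->]].
  destruct (walk_app_inv _ _ _ _ _ Hp) as [w [Hp1 [HeH [<- Hp2]]]].
  assert (Hqu : exists qu, walk E s qu (fst e) /\
                           path_lat l phi qu < path_lat l psi p1 + d).
  { apply NNPP. intros Hno. apply Hfst. exists p1. split; [exact Hp1|].
    exists d. split; [exact Hd|]. intros q Hq. apply Rnot_lt_le. eauto. }
  destruct Hqu as [qu [Hqu Hlat]].
  assert (HG : path_lat l psi qH + d <= path_lat l phi qu + l e (edge_load phi e)).
  { rewrite <- (Rplus_0_r (l e _)). change (l e _ + 0) with (path_lat l phi [e]).
    rewrite <- path_lat_app. apply Hsnd, (walk_app _ _ _ (fst e)); simpl; auto. }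
  assert (HH : path_lat l psi (p1 ++ e :: p2) <= path_lat l psi (qH ++ p2))
    by (apply psi_wardrop; [exact Hused | now apply (walk_app _ _ _ (snd e))]).
  rewrite !path_lat_app in HH. change (path_lat l psi (e :: p2)) with
    (l e (edge_load psi e) + path_lat l psi p2) in HH.
  destruct (Rlt_le_dec (edge_load psi e) (edge_load phi e)) as [Hlt | Hge]; [exact Hlt|].
  destruct (Hl e He) as [_ [Hmono _]].
  pose proof (Hmono _ _ Hx Hge). lra.
Qed.

End StrictlyAhead.

Lemma scaled_le_margin (x y : R) : 0 <= x -> 0 <= y -> y = 0 \/ y < x ->
  exists eps, 0 < eps /\ (1 + eps) * y <= x.
Proof.
  intros Hx Hy [-> | Hyx]; [exists 1; split; lra|].
  destruct Hy as [Hy | <-]; [|exists 1; split; lra].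
  exists ((x - y) / y). split; [apply Rdiv_lt_0_compat; lra|].
  right. field. lra.
Qed.

Lemma uniform_scaled_le_margin (P : edge -> Prop) (x y : edge -> R) L :
  (forall e, In e L -> P e -> 0 <= x e /\ 0 <= y e /\ (y e = 0 \/ y e < x e)) ->
  exists eps, 0 < eps /\ forall e, In e L -> P e -> (1 + eps) * y e <= x e.
Proof.
  induction L as [|a L IH]; intros H; [exists 1; split; [lra | intros e []]|].
  destruct IH as [eps [Heps HL]]; [intros e He; apply H; now right|].
  destruct (classic (P a)) as [Pa | nPa].
  - destruct (H a (or_introl eq_refl) Pa) as [Hxa [Hya Hyxa]].
    destruct (scaled_le_margin _ _ Hxa Hya Hyxa) as [ea [Hea Ha]].
    exists (Rmin eps ea). split; [now apply Rmin_pos|].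
    pose proof (Rmin_l eps ea). pose proof (Rmin_r eps ea).
    intros e [<- | He] Pe; [nra|].
    destruct (H e (or_intror He) Pe) as [_ [Hye _]]. specialize (HL e He Pe). nra.
  - exists eps. split; [exact Heps|]. intros e [<- | He] Pe; [contradiction | auto].
Qed.

Lemma edge_weak_of_cut V E s t (x y : edge -> R) (W : nat -> Prop) :
  (forall e, 0 <= x e) -> (forall e, 0 <= y e) ->
  conserves V E s t x -> conserves V E s t y ->
  edge_flow_value E s x <= edge_flow_value E s y -> 0 < edge_flow_value E s y ->
  ~ W s -> W t ->
  (forall e, In e E -> ~ W (fst e) -> W (snd e) -> y e = 0 \/ y e < x e) ->
  edge_weak V E s t.
Proof.
  intros Hx Hy Hcx Hcy Hval Hpos Hs Ht Hcut.
  set (crossing := fun e : edge => ~ W (fst e) /\ W (snd e)).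
  destruct (uniform_scaled_le_margin crossing x y E) as [eps [Heps Hscale]].
  { intros e He [Hu Hv]. auto. }
  set (c := fun e => if excluded_middle_informative (crossing e) then x e
                     else Rmax (x e) ((1 + eps) * y e)).
  assert (Hxc : forall e, x e <= c e).
  { intros e. unfold c. destruct (excluded_middle_informative _); [lra | apply Rmax_l]. }
  exists c. split; [intros e _; pose proof (Hx e); pose proof (Hxc e); lra|].
  exists x. split; [split; [intros e _; auto | exact Hcx]|]. split.
  - intros p Hp. destruct (walk_cross W E s p t Hp Hs Ht) as [e [Hep He]].
    exists e. split; [exact Hep|].
    unfold c. destruct (excluded_middle_informative _); [reflexivity | contradiction].
  - exists (fun e => (1 + eps) * y e). split; [split|].
    + intros e He. pose proof (Hy e). split; [nra|].
      unfold c. destruct (excluded_middle_informative _); [auto | apply Rmax_r].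
    + now apply conserves_scal.
    + unfold edge_flow_value, out_sum in *. rewrite sumR_map_scal. nra.
Qed.

Lemma wardrop_latency_zero E s t l c : wardrop_latency E s t 0 l c -> c = 0.
Proof. intros [phi [_ [[_ Hc] | [Hr _]]]]; [exact Hc | lra]. Qed.

Lemma wardrop_latency_pos E s t r l c : 0 < r -> wardrop_latency E s t r l c ->
  exists phi, is_wardrop E s t r l phi /\
    exists p, 0 < path_value phi p /\ c = path_lat l phi p.
Proof. intros Hr [phi [Hw [[Hr0 _] | [_ Hp]]]]; [lra | eauto]. Qed.

Lemma is_path_flow_incl E E' s t phi :
  incl E E' -> is_path_flow E s t phi -> is_path_flow E' s t phi.
Proof.
  intros Hi Hphi pv Hpv. destruct (Hphi pv Hpv). split; [eapply walk_incl|]; eauto.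
Qed.

Theorem theorem7 (V : list nat) (E : list edge) (s t : nat) :
  is_st_graph V E s t -> vulnerable V E s t -> edge_weak V E s t.
Proof.
  intros [_ [HEnd [_ [_ [_ [Hst [Hnos _]]]]]]]
         [r [l [EH [cG [cH [Hr [Hl [HEH [HG [HH Hlt]]]]]]]]]].
  destruct Hr as [Hr | <-].
  2:{ rewrite (wardrop_latency_zero _ _ _ _ _ HG), (wardrop_latency_zero _ _ _ _ _ HH) in Hlt.
      lra. }
  destruct (wardrop_latency_pos _ _ _ _ _ _ Hr HG) as [phi [[Hphi [HvG HwG]] [p0 [Hp0 ->]]]].
  destruct (wardrop_latency_pos _ _ _ _ _ _ Hr HH) as [psi [[Hpsi [HvH HwH]] [q0 [Hq0 ->]]]].
  pose proof (is_path_flow_incl _ _ _ _ _ HEH Hpsi) as HpsiG.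
  assert (Hx : forall e, 0 <= edge_load phi e)
    by (intros e; apply edge_load_nonneg; intros pv Hpv; apply Hphi, Hpv).
  assert (Hy : forall e, 0 <= edge_load psi e)
    by (intros e; apply edge_load_nonneg; intros pv Hpv; apply Hpsi, Hpv).
  destruct (path_value_pos_inv _ _ Hq0) as [[q ?] [Hq [<- _]]].
  apply (edge_weak_of_cut V E s t (edge_load phi) (edge_load psi)
           (strictly_ahead E EH s l phi psi)); auto.
  - apply edge_load_conserves; auto.
  - apply edge_load_conserves; auto.
  - rewrite !(edge_load_value E s t); auto. lra.
  - rewrite (edge_load_value E s t); auto. lra.
  - apply source_not_strictly_ahead; auto. intros pv Hpv; apply Hpsi, Hpv.
  - apply (sink_strictly_ahead _ _ _ _ _ _ _ q (path_lat l phi p0)); auto.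
    exact (proj1 (Hpsi _ Hq)).
  - intros e He Hu Hv. destruct (Hy e) as [Hpos | Hzero]; [right | now left].
    now apply (crossing_edge_load_lt E EH s t l).
Qed.
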